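(* Let $a:[0,\infty)\to[0,\infty)$ be non-negative and non-decreasing, and define its generalized inverse $a^{\leftarrow}(y)=\sup\{x\ge0:a(x)\le y\}$ for $y\ge a(0)$. Let $s\in\{1,2,\dots\}$, $\delta\in(0,1/2)$, and for $n=1,2,\dots$ let $S_s(n)=\sum_{k=0}^n\ln\bigl(1+\tfrac1{\sqrt s}a\bigl(\tfrac{k+1}{\sqrt s}\bigr)\bigr)$. Then $0\le S_s(n)-\sqrt s\int_0^{(n+1)/\sqrt s}\ln\bigl(1+\tfrac1{\sqrt s}a(x)\bigr)dx\le\tfrac12 s^{\delta-1/2}$ whenever $n+1<\sqrt s\,a^{\leftarrow}(s^\delta/2)$. Furthermore, let $A(x)=\int_0^x a^2(u)\,du$ for $x\ge0$. Unless $a\equiv0$, $A$ is continuous and strictly increasing from $0$ at $x_0:=\sup\{x\ge0:a(x)=0\}$ to $\infty$ as $x\to\infty$; and, with $A^{\leftarrow}(y)=\sup\{x\ge0:A(x)\le y\}$, $0\le\int_0^{(n+1)/\sqrt s}a(x)\,dx-\sqrt s\int_0^{(n+1)/\sqrt s}\ln\bigl(1+\tfrac1{\sqrt s}a(x)\bigr)dx\le\tfrac12 s^{-\delta}$ whenever $n+1<\sqrt s\,A^{\leftarrow}(s^{1/2-\delta})$. *)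

From HB Require Import structures.
From mathcomp Require Import all_boot all_order all_algebra.
From mathcomp Require Import all_classical all_reals all_analysis.
Set Implicit Arguments. Unset Strict Implicit. Unset Printing Implicit Defensive.
Import Order.TTheory GRing.Theory Num.Theory.
Import numFieldNormedType.Exports.
Local Open Scope classical_set_scope.
Local Open Scope ring_scope.

(* Lebesgue integral of f over [0, t] (real valued; the integrands used
   below are monotone/bounded on compacts, hence integrable). *)
Definition int0 (R : realType) (f : R -> R) (t : R) : R :=
  Rintegral (@lebesgue_measure R) `[0, t] f.

(* generalized inverse  f^{<-}(y) = sup {x >= 0 : f x <= y}, valued in the
   extended reals (+oo when the set is unbounded, -oo when it is empty). *)
Definition ginv (R : realType) (f : R -> R) (y : R) : \bar R :=
  ereal_sup (EFin @` [set x : R | 0 <= x /\ f x <= y]).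

Definition Afun (R : realType) (a : R -> R) (x : R) : R :=
  int0 (fun u => a u ^+ 2) x.

(* x0 = sup {x >= 0 : a x = 0}, with the convention sup of the empty set
   (among x >= 0) equal to 0. *)
Definition x0 (R : realType) (a : R -> R) : R :=
  sup ([set 0] `|` [set x : R | 0 <= x /\ a x = 0]).

Definition Ssum (R : realType) (a : R -> R) (s n : nat) : R :=
  \sum_(0 <= k < n.+1)
     ln (1 + (Num.sqrt (s%:R))^-1 * a (k.+1%:R / Num.sqrt (s%:R))).

From HB Require Import structures.
From mathcomp Require Import all_boot all_order all_algebra.
From mathcomp Require Import all_classical all_reals all_analysis.
From mathcomp Require Import measurable_realfun lra ring.
Import Order.TTheory GRing.Theory Num.Theory.
Import numFieldNormedType.Exports.
Local Open Scope classical_set_scope.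
Local Open Scope ring_scope.

(* Extending [a] to the left of 0 by [a 0] makes [a], [a ^+ 2] and
   [ln (1 + h * a)] nondecreasing on the whole line, hence integrable on every
   compact interval.  For a nondecreasing [f] the increment of the integral
   over [p, q] lies between [(q - p) * f p] and [(q - p) * f q]; on a grid of
   mesh [h] this traps the integral between the left and right Riemann sums,
   which differ by the telescoping sum [f (n h) - f 0].  With
   [f = ln (1 + h * a)], [h = 1 / sqrt s], the first error is thus at most
   [ln (1 + h a(t)) <= h a(t)], and [a(t) <= s^delta / 2] below the
   generalized inverse.  The second error is integrated pointwise from
   [u - u^2/2 <= ln (1 + u) <= u], which gives
   [0 <= a - ln (1 + h a) / h <= h a^2 / 2]; its integral is [h A(t) / 2] and
   [A(t) <= s^(1/2 - delta)] below the generalized inverse of [A].  The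
   increment bounds also give the properties of [A]: [a] vanishes below [x0]
   and is positive above it. *)

Section nondecreasing_integral.
Context {R : realType}.
Notation mu := (@lebesgue_measure R).

Lemma eq_int0 (f g : R -> R) (t : R) : (forall x, 0 <= x -> f x = g x) ->
  int0 f t = int0 g t.
Proof.
move=> fg; apply: eq_Rintegral => x; rewrite inE/= in_itv/= => /andP[x0 _].
exact: fg.
Qed.

Lemma nondecreasing_integrable (f : R -> R) (c d : R) :
  nondecreasing_fun f -> mu.-integrable `[c, d] (EFin \o f).
Proof.
move=> f_nd; apply: measurable_bounded_integrable => //.
- by have := lebesgue_measure_itv `[c, d] => /= ->; case: ifP; rewrite ?ltry.
- exact: nondecreasing_measurable.
rewrite /bounded_near; near=> M => x /=; rewrite in_itv/= => /andP[cx xd].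
have fcdM : `|f c| + `|f d| <= M.
  by near: M; apply: nbhs_pinfty_ge; rewrite num_real.
apply: le_trans fcdM; rewrite ler_norml; apply/andP; split.
- apply: le_trans (f_nd _ _ cx).
  by rewrite lerNl -normrN (le_trans (ler_norm _)) // lerDl.
- by rewrite (le_trans (f_nd _ _ xd)) // (le_trans (ler_norm _)) // lerDr.
Unshelve. all: end_near.
Qed.

Variable f : R -> R.
Hypothesis f_nd : nondecreasing_fun f.

Let integrable_oc (g : R -> R) (e d : R) :
  nondecreasing_fun g -> mu.-integrable `]e, d] (EFin \o g).
Proof.
move=> g_nd; apply: (@integrableS _ _ _ mu `[e, d]) => //.
- by apply: subset_itvr; rewrite bnd_simp.
- exact: nondecreasing_integrable.
Qed.

Lemma int0_sub (p q : R) : 0 <= p -> p <= q ->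
  int0 f q - int0 f p = \int[mu]_(x in `]p, q]) f x.
Proof.
move=> p0 pq; rewrite /int0.
have := @Rintegral_itvB R f (BLeft 0) (BRight q) p.
by rewrite !bnd_simp => ->//; exact: nondecreasing_integrable.
Qed.

Let measure_itv_oc {e d : R} : e <= d -> fine (mu `]e, d]) = d - e.
Proof.
rewrite le_eqVlt => /predU1P[<-|ed]; last first.
  by have := lebesgue_measure_itv `]e, d] => /= ->; rewrite lte_fin ed.
by rewrite set_itv_ge ?bnd_simp ?ltxx // measure0 subrr.
Qed.

Lemma int0_sub_ge {p q : R} : 0 <= p -> p <= q ->
  (q - p) * f p <= int0 f q - int0 f p.
Proof.
move=> p0 pq; rewrite int0_sub // -(measure_itv_oc pq) mulrC -Rintegral_cst //.
apply: le_Rintegral => //; try exact: integrable_oc.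
by move=> x /=; rewrite in_itv/= => /andP[/ltW px _]; apply: f_nd.
Qed.

Lemma int0_sub_le {p q : R} : 0 <= p -> p <= q ->
  int0 f q - int0 f p <= (q - p) * f q.
Proof.
move=> p0 pq; rewrite int0_sub // -(measure_itv_oc pq) mulrC -Rintegral_cst //.
apply: le_Rintegral => //; try exact: integrable_oc.
by move=> x /=; rewrite in_itv/= => /andP[_ xq]; apply: f_nd.
Qed.

Lemma int0_riemann_sums (m : nat) (h : R) : 0 <= h ->
  h * \sum_(0 <= k < m) f (k%:R * h) <= int0 f (m%:R * h) <=
  h * \sum_(0 <= k < m) f (k.+1%:R * h).
Proof.
move=> h0; elim: m => [|m /andP[IHl IHr]].
  by rewrite !big_geq // mulr0 /int0 mul0r set_itv1 Rintegral_set1 lexx.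
have mh0 : 0 <= m%:R * h by rewrite mulr_ge0.
have mhS : m%:R * h <= m.+1%:R * h by rewrite ler_wpM2r // ler_nat.
have dh : m.+1%:R * h - m%:R * h = h by rewrite -mulrBl -natrB // subSnn mul1r.
have := int0_sub_ge mh0 mhS; have := int0_sub_le mh0 mhS; rewrite dh => le ge.
by rewrite !big_nat_recr //= !mulrDr; apply/andP; split; lra.
Qed.

Lemma right_riemann_sum_error (m : nat) (h : R) : 0 < h ->
  0 <= \sum_(0 <= k < m) f (k.+1%:R * h) - h^-1 * int0 f (m%:R * h)
    <= f (m%:R * h) - f 0.
Proof.
move=> h0; have /andP[lo up] := int0_riemann_sums m h (ltW h0).
have hK (S : R) : h^-1 * (h * S) = S by rewrite mulrA mulVf ?gt_eqF // mul1r.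
have hV0 : 0 <= h^-1 by rewrite invr_ge0 ltW.
have {}lo := ler_wpM2l hV0 lo; rewrite hK in lo.
have {}up := ler_wpM2l hV0 up; rewrite hK in up.
have tele : \sum_(0 <= k < m) f (k.+1%:R * h) - \sum_(0 <= k < m) f (k%:R * h)
    = f (m%:R * h) - f 0.
  by rewrite -sumrB (telescope_sumr (fun k => f (k%:R * h))) // mul0r.
by apply/andP; split; lra.
Qed.

Lemma int0_ltr (p m q : R) : 0 <= p -> p <= m -> m < q -> 0 <= f p -> 0 < f m ->
  int0 f p < int0 f q.
Proof.
move=> p0 pm mq fp0 fm0.
have := int0_sub_ge p0 pm; have := int0_sub_ge (le_trans p0 pm) (ltW mq).
have : 0 < (q - m) * f m by rewrite mulr_gt0 // subr_gt0.
have : 0 <= (m - p) * f p by rewrite mulr_ge0 // subr_ge0.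
lra.
Qed.

Lemma int0_cvgy (c : R) : 0 <= c -> 0 < f c -> int0 f x @[x --> +oo] --> +oo.
Proof.
move=> c0 fc0; apply/cvgryPge => A; near=> x.
have cx : c <= x by near: x; apply: nbhs_pinfty_ge; rewrite num_real.
have : c + (A - int0 f c) / f c <= x.
  by near: x; apply: nbhs_pinfty_ge; rewrite num_real.
rewrite -lerBrDl ler_pdivrMr // => xA.
have := int0_sub_ge c0 cx; lra.
Unshelve. all: end_near.
Qed.

Section nonnegative.
Hypothesis f_ge0 : forall x, 0 <= x -> 0 <= f x.

Lemma int0_nondecreasing (p q : R) : 0 <= p -> p <= q -> int0 f p <= int0 f q.
Proof.
move=> p0 pq; rewrite -subr_ge0; apply: le_trans (int0_sub_ge p0 pq).
by rewrite mulr_ge0 ?f_ge0 // subr_ge0.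
Qed.

Lemma int0_lipschitz {M p q : R} : 0 <= p -> 0 <= q -> p <= M -> q <= M ->
  `|int0 f q - int0 f p| <= `|q - p| * f M.
Proof.
wlog pq : p q / p <= q => [hwlog p0 q0 pM qM|p0 _ _ qM].
  have [/hwlog|qp] := leP p q; first exact.
  by rewrite distrC [`|q - p|]distrC hwlog // ltW.
rewrite !ger0_norm ?subr_ge0 ?int0_nondecreasing //.
by rewrite (le_trans (int0_sub_le p0 pq)) // ler_wpM2l ?subr_ge0 // f_nd.
Qed.

Lemma int0_continuous : {within `[0, +oo[, continuous (int0 f)}.
Proof.
apply/subspace_continuousP => x; rewrite /= in_itv/= andbT => x0.
apply/cvgrPdist_le => e e0; rewrite near_withinE.
have K0 : 0 < f (x + 1) + 1 by rewrite ltr_wpDl ?f_ge0 // addr_ge0.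
apply/nbhs_ballP; exists (Order.min 1 (e / (f (x + 1) + 1))) => /=.
  by rewrite lt_min ltr01 divr_gt0.
move=> y; rewrite /ball /= lt_min => /andP[xy1 xye]; rewrite in_itv/= andbT => y0.
have x1 : x <= x + 1 by rewrite lerDl.
have y1 : y <= x + 1 by move: xy1; rewrite ltr_norml; lra.
apply: le_trans (int0_lipschitz y0 x0 y1 x1) _.
apply: le_trans (_ : e / (f (x + 1) + 1) * (f (x + 1) + 1) <= e); last first.
  by rewrite divfK ?gt_eqF.
by apply: ler_pM; rewrite ?f_ge0 ?lerDl ?(ltW xye) ?addr_ge0.
Qed.

End nonnegative.

End nondecreasing_integral.

Section ln1Dx.
Context {R : realType}.

Lemma ln1Dx_ge (x : R) : 0 <= x -> x - x ^+ 2 / 2 <= ln (1 + x).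
Proof.
(* Written with pointwise operations on functions so that the [is_derive]
   instances compute its derivative. *)
move=> x0; pose G : R -> R := @ln R - id + 2^-1 \*: (id - cst 1) ^+ 2.
have dG (y : R) : 0 < y -> is_derive y 1 G ((y - 1) ^+ 2 / y).
  move=> y0; have ? := is_derive1_ln y0.
  rewrite /G; eapply is_derive_eq; first typeclasses eauto.
  by rewrite /GRing.scale /= subr0 !mulr1 !fctE expr1; field; rewrite gt_eqF.
have G_nd : G 1 <= G (1 + x).
  apply: (@ger0_derive1_ndecr _ G 1 (1 + x)) => //; last by rewrite lerDl.
  - move=> y; rewrite in_itv/= => /andP[y1 _].
    by have [] := dG y (lt_trans ltr01 y1).
  - move=> y; rewrite in_itv/= => /andP[y1 _]; have y0 := lt_trans ltr01 y1.
    rewrite derive1E; have [_ ->] := dG y y0.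
    by rewrite divr_ge0 ?sqr_ge0 ?ltW.
  - apply: derivable_within_continuous => y; rewrite in_itv/= => /andP[y1 _].
    by have [] := dG y (lt_le_trans ltr01 y1).
have GE (y : R) : G y = ln y - y + 2^-1 * (y - 1) ^+ 2.
  by rewrite /G !fctE.
rewrite !GE ln1 [1 + x - 1]addrAC !subrr add0r expr0n mulr0 addr0 in G_nd.
rewrite expr2 in G_nd *; lra.
Qed.

Lemma ln1Dx_scaled_error (h u : R) : 0 < h -> 0 <= u ->
  0 <= u - h^-1 * ln (1 + h * u) <= h / 2 * u ^+ 2.
Proof.
move=> h0 u0; have hu0 : 0 <= h * u by rewrite mulr_ge0 // ltW.
have hV0 : 0 <= h^-1 by rewrite invr_ge0 ltW.
apply/andP; split.
  by rewrite subr_ge0 -{2}(mulKf (lt0r_neq0 h0) u) ler_wpM2l // le_ln1Dx //; lra.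
have := ler_wpM2l hV0 (ln1Dx_ge _ hu0).
have -> : h^-1 * (h * u - (h * u) ^+ 2 / 2) = u - h / 2 * u ^+ 2.
  by field; rewrite gt_eqF.
lra.
Qed.

End ln1Dx.

Lemma le_of_lt_ginv {R : realType} (f : R -> R) (y t : R) :
  (forall x z, 0 <= x -> x <= z -> f x <= f z) ->
  0 <= t -> (t%:E < ginv f y)%E -> f t <= y.
Proof.
move=> f_nd t0 /ereal_sup_gt[_ [x [x0 fx] <-]]; rewrite lte_fin => tx.
exact: le_trans (f_nd _ _ t0 (ltW tx)) fx.
Qed.

Lemma invsqrt_powR {R : realType} (x p : R) : 0 < x ->
  (Num.sqrt x)^-1 * powR x p = powR x (p - 1 / 2).
Proof.
move=> x0; rewrite powRB; last by rewrite (gt_eqF x0) implybT.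
by rewrite div1r powR12_sqrt ?ltW // mulrC.
Qed.

Section left_extension.
Context {R : realType}.

Definition ext0 (a : R -> R) (x : R) : R := a (Order.max 0 x).

Lemma ext0E (a : R -> R) (x : R) : 0 <= x -> ext0 a x = a x.
Proof. by move=> x0; rewrite /ext0 (max_idPr x0). Qed.

Lemma ext0_ge0 (a : R -> R) : (forall x, 0 <= x -> 0 <= a x) ->
  forall x, 0 <= ext0 a x.
Proof. by move=> a_ge0 x; apply: a_ge0; rewrite le_max lexx. Qed.

Lemma ext0_nondecreasing (a : R -> R) :
  (forall x y, 0 <= x -> x <= y -> a x <= a y) -> nondecreasing_fun (ext0 a).
Proof.
move=> a_nd x y xy; apply: a_nd; first by rewrite le_max lexx.
by rewrite ge_max le_max lexx /= le_max xy orbT.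
Qed.

End left_extension.

Section nonnegative_nondecreasing.
Context {R : realType}.
Notation mu := (@lebesgue_measure R).
Variable a : R -> R.
Hypothesis a_ge0 : forall x, 0 <= x -> 0 <= a x.
Hypothesis a_nd : forall x y, 0 <= x -> x <= y -> a x <= a y.

Let a_ext_ge0 := ext0_ge0 a a_ge0.
Let a_ext_nd := ext0_nondecreasing a a_nd.

Let ln_ext_nd {h : R} : 0 <= h ->
  nondecreasing_fun (fun x => ln (1 + h * ext0 a x)).
Proof.
move=> h0 x y xy; have pos z : 0 < 1 + h * ext0 a z.
  by have := mulr_ge0 h0 (a_ext_ge0 z); lra.
by rewrite ler_ln ?posrE // lerD2l ler_wpM2l // a_ext_nd.
Qed.

Lemma ln_riemann_sum_error (n : nat) (h : R) : 0 < h ->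
  0 <= \sum_(0 <= k < n) ln (1 + h * a (k.+1%:R * h))
         - h^-1 * int0 (fun x => ln (1 + h * a x)) (n%:R * h)
    <= h * a (n%:R * h).
Proof.
move=> h0; pose L x := ln (1 + h * ext0 a x).
have kh0 (k : nat) : 0 <= k%:R * h by rewrite mulr_ge0 // ltW.
have /andP[lo up] := right_riemann_sum_error _ (ln_ext_nd (ltW h0)) n h h0.
have -> : int0 (fun x => ln (1 + h * a x)) (n%:R * h) = int0 L (n%:R * h).
  by apply: eq_int0 => x x0; rewrite /L ext0E.
have -> : \sum_(0 <= k < n) ln (1 + h * a (k.+1%:R * h)) =
          \sum_(0 <= k < n) L (k.+1%:R * h).
  by apply: eq_bigr => k _; rewrite /L ext0E.
apply/andP; split => //; apply: le_trans up _.
have L0 : 0 <= L 0 by rewrite ln_ge0 // lerDl mulr_ge0 // ltW.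
have Ln : L (n%:R * h) <= h * a (n%:R * h).
  rewrite /L -(ext0E a _ (kh0 n)) le_ln1Dx //.
  by have := mulr_ge0 (ltW h0) (a_ext_ge0 (n%:R * h)); lra.
by move: L0 Ln; rewrite /L; lra.
Qed.

Let sqr_ext_nd : nondecreasing_fun (fun x => ext0 a x ^+ 2).
Proof. by move=> x y xy; rewrite ler_pXn2r ?nnegrE ?a_ext_nd. Qed.

Let AfunE : Afun a = int0 (fun x => ext0 a x ^+ 2).
Proof. by apply/funext => t; apply: eq_int0 => x x0; rewrite ext0E. Qed.

Lemma Afun_nondecreasing (x y : R) : 0 <= x -> x <= y -> Afun a x <= Afun a y.
Proof. by rewrite AfunE; apply: int0_nondecreasing => // u _; apply: sqr_ge0. Qed.

Lemma Afun_continuous : {within `[0, +oo[, continuous (Afun a)}.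
Proof. by rewrite AfunE; apply: int0_continuous => // u _; apply: sqr_ge0. Qed.

Lemma eq0_lt_x0 (t : R) : 0 <= t -> t < x0 a -> a t = 0.
Proof.
move=> t0 tx0; have [|z [->|[z0 az]] tz] := sup_gt _ tx0.
- by exists 0; left.
- by move: t0; rewrite leNgt tz.
- by apply/eqP; rewrite eq_le a_ge0 // andbT -az a_nd // ltW.
Qed.

Lemma Afun_x0 : Afun a (x0 a) = 0.
Proof.
rewrite AfunE /int0 -Rintegral_itv_bndo_bndc; last first.
  apply: (@integrableS _ _ _ mu `[0, x0 a]) => //.
    by apply: subset_itvl; rewrite bnd_simp.
  exact: nondecreasing_integrable.
rewrite (@eq_Rintegral _ _ _ _ _ (cst 0)) ?Rintegral_cst ?mul0r // => u.
rewrite inE/= in_itv/= => /andP[u0 ux0].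
by rewrite ext0E // eq0_lt_x0 // expr0n.
Qed.

Section not_identically_zero.
Hypothesis a_neq0 : exists x, 0 <= x /\ a x != 0.

Let zeros := [set 0] `|` [set x : R | 0 <= x /\ a x = 0].

Let zeros_ubound : has_ubound zeros.
Proof.
have [x1 [x10 ax1]] := a_neq0; exists x1 => z [->//|[z0 az]].
rewrite leNgt; apply/negP => x1z; move: ax1.
by rewrite eq_le a_ge0 // andbT -az a_nd // ltW.
Qed.

Lemma x0_ge0 : 0 <= x0 a.
Proof. by apply: (ub_le_sup zeros_ubound); left. Qed.

Lemma gt0_gt_x0 (t : R) : x0 a < t -> 0 < a t.
Proof.
move=> x0t; have t0 := le_lt_trans x0_ge0 x0t.
rewrite lt_neqAle a_ge0 ?ltW // andbT eq_sym; apply/eqP => at0.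
have : t <= x0 a.
  by apply: (ub_le_sup zeros_ubound); right; split => //; exact: ltW.
by rewrite leNgt x0t.
Qed.

Lemma Afun_ltr : {in `[x0 a, +oo[ &, {homo Afun a : x y / x < y}}.
Proof.
move=> x y; rewrite !in_itv/= !andbT => x0x _ xy; rewrite AfunE.
have x_ge0 := le_trans x0_ge0 x0x.
apply: (@int0_ltr _ _ sqr_ext_nd x ((x + y) / 2)) => //.
- lra.
- lra.
- exact: sqr_ge0.
- by rewrite ext0E ?exprn_gt0 ?gt0_gt_x0 //; lra.
Qed.

Lemma Afun_cvgy : Afun a x @[x --> +oo] --> +oo.
Proof.
have [x1 [x10 ax1]] := a_neq0; rewrite AfunE.
apply: (@int0_cvgy _ _ sqr_ext_nd x1 x10).
by rewrite ext0E // exprn_gt0 // lt0r ax1 a_ge0.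
Qed.

End not_identically_zero.

Lemma ln_int0_error (h t : R) : 0 < h -> 0 <= t ->
  0 <= int0 a t - h^-1 * int0 (fun x => ln (1 + h * a x)) t <= h / 2 * Afun a t.
Proof.
move=> h0 t0.
pose L x := h^-1 * ln (1 + h * ext0 a x).
pose Q x := h / 2 * ext0 a x ^+ 2.
have L_nd : nondecreasing_fun L.
  by move=> x y xy; rewrite ler_wpM2l ?invr_ge0 ?(ltW h0) // ln_ext_nd // ltW.
have Q_nd : nondecreasing_fun Q.
  move=> x y xy; rewrite ler_wpM2l ?divr_ge0 ?(ltW h0) // ler_pXn2r ?nnegrE //.
  exact: a_ext_nd.
have LQ_nd : nondecreasing_fun (fun x => L x + Q x).
  by move=> x y xy; rewrite lerD ?L_nd ?Q_nd.
have -> : int0 a t = int0 (ext0 a) t by apply: eq_int0 => x x0; rewrite ext0E.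
have -> : h^-1 * int0 (fun x => ln (1 + h * a x)) t = int0 L t.
  rewrite (eq_int0 _ (fun x => ln (1 + h * ext0 a x))); last first.
    by move=> x x0; rewrite ext0E.
  rewrite /int0 -RintegralZl //.
  exact: nondecreasing_integrable (ln_ext_nd (ltW h0)).
have -> : h / 2 * Afun a t = int0 Q t.
  by rewrite AfunE /int0 RintegralZl //; exact: nondecreasing_integrable.
have pointwise x : 0 <= ext0 a x - L x <= Q x by apply: ln1Dx_scaled_error.
have LQ : int0 (ext0 a) t <= int0 L t + int0 Q t.
  rewrite /int0 -RintegralD //; try exact: nondecreasing_integrable.
  apply: le_Rintegral => //; try exact: nondecreasing_integrable.
  by move=> x _; have /andP[_] := pointwise x; rewrite /L /Q /ext0; lra.
apply/andP; split; last by lra.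
rewrite subr_ge0 /int0.
apply: le_Rintegral => //; try exact: nondecreasing_integrable.
by move=> x _; have /andP[] := pointwise x; rewrite /L /ext0; lra.
Qed.

End nonnegative_nondecreasing.

Theorem lemmaE1 (R : realType) (a : R -> R) (s : nat) (delta : R)
  (a_ge0 : forall x, 0 <= x -> 0 <= a x)
  (a_nd : forall x y, 0 <= x -> x <= y -> a x <= a y)
  (s_gt0 : (0 < s)%N) (delta_gt0 : 0 < delta) (delta_lt : delta < 1 / 2) :
  let rs := Num.sqrt (s%:R : R) in
  let L := fun x => ln (1 + rs^-1 * a x) in
  (forall n : nat, (0 < n)%N ->
     ((n.+1%:R)%:E < rs%:E * ginv a (powR (s%:R) delta / 2))%E ->
     0 <= Ssum a s n - rs * int0 L (n.+1%:R / rs) /\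
     Ssum a s n - rs * int0 L (n.+1%:R / rs)
       <= 1 / 2 * powR (s%:R) (delta - 1 / 2))
  /\
  ((exists x, 0 <= x /\ a x != 0) ->
     {within `[0, +oo[, continuous (Afun a)} /\
     Afun a (x0 a) = 0 /\
     {in `[x0 a, +oo[ &, {homo Afun a : x y / x < y}} /\
     Afun a x @[x --> +oo] --> +oo)
  /\
  (forall n : nat, (0 < n)%N ->
     ((n.+1%:R)%:E < rs%:E * ginv (Afun a) (powR (s%:R) (1 / 2 - delta)))%E ->
     0 <= int0 a (n.+1%:R / rs) - rs * int0 L (n.+1%:R / rs) /\
     int0 a (n.+1%:R / rs) - rs * int0 L (n.+1%:R / rs)
       <= 1 / 2 * powR (s%:R) (- delta)).
Proof.
move=> rs L.
have rs_gt0 : 0 < rs by rewrite sqrtr_gt0 ltr0n.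
have h_gt0 : 0 < rs^-1 by rewrite invr_gt0.
have s_pos : 0 < s%:R :> R by rewrite ltr0n.
have t_ge0 (n : nat) : 0 <= n.+1%:R / rs by rewrite divr_ge0 // ltW.
have below_ginv f y (n : nat) : (forall x z, 0 <= x -> x <= z -> f x <= f z) ->
    ((n.+1%:R)%:E < rs%:E * ginv f y)%E -> f (n.+1%:R / rs) <= y.
  move=> f_nd; rewrite -lte_pdivrMl // -EFinM mulrC.
  exact: le_of_lt_ginv f_nd (t_ge0 n).
split; [|split].
- move=> n _ /(below_ginv _ _ _ a_nd) an.
  have /andP[lo up] := ln_riemann_sum_error a a_ge0 a_nd n.+1 _ h_gt0.
  rewrite invrK in lo up; split => //; apply: le_trans up _.
  apply: le_trans (ler_wpM2l (ltW h_gt0) an) _.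
  by rewrite mulrA invsqrt_powR // mulrC div1r.
- move=> a_neq0; split; first exact: Afun_continuous.
  split; first exact: Afun_x0.
  by split; [exact: Afun_ltr | exact: Afun_cvgy].
- move=> n _ /(below_ginv _ _ _ (Afun_nondecreasing a a_ge0 a_nd)) An.
  have /andP[lo up] := ln_int0_error a a_ge0 a_nd _ _ h_gt0 (t_ge0 n).
  rewrite invrK in lo up; split => //; apply: le_trans up _.
  apply: le_trans (ler_wpM2l _ An) _; first by rewrite divr_ge0 // ltW.
  by rewrite mulrAC invsqrt_powR // mulrC div1r addrAC subrr add0r.
Qed.
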